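(* Let $W:\mathbb{R}^{3\times2}_+\to[0,\infty)$ be continuously differentiable and satisfy (H4): there is a constant $K>0$ such that $|W_F(\bm F)\bm F^T|\le K(W(\bm F)+1)$ for all $\bm F\in\mathbb{R}^{3\times2}_+$. Let $V\subset\mathbb{R}^3$ be a $2$-dimensional subspace, $\bm 1$ the identity on $V$, and $\bm T\in L(V)$. If $|\bm T-\bm 1|<\delta$ with $\delta>0$ sufficiently small, then there is a constant $C>0$ such that $|W_F(\bm T\bm A)\bm A^T|\le C(W(\bm A)+1)$ for all $\bm A\in L(\mathbb{R}^2,V)\cap\mathbb{R}^{3\times2}_+$.
   Context: $\mathbb{R}^{3\times2}_+:=\{\bm F\in\mathbb{R}^{3\times2}:\det(\bm F^T\bm F)>0\}$ (an open subset of $\mathbb{R}^{3\times2}$); $W_F$ denotes the derivative of $W$ with respect to $\bm F$, a $3\times2$ matrix; $|\cdot|$ is the Frobenius norm (so $|\bm 1|=\sqrt2$). Elements of $L(\mathbb{R}^2,V)$ are identified with $3\times2$ matrices whose columns lie in $V$. *)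

From HB Require Import structures.
From mathcomp Require Import all_boot all_order all_algebra.
From mathcomp Require Import all_classical all_reals all_analysis.
Set Implicit Arguments. Unset Strict Implicit. Unset Printing Implicit Defensive.
Import Order.TTheory GRing.Theory Num.Theory.
Import numFieldNormedType.Exports.
Local Open Scope ring_scope.

Definition frob (R : realType) (m n : nat) (A : 'M[R]_(m, n)) : R :=
  Num.sqrt (\sum_(i < m) \sum_(j < n) A i j ^+ 2).

Definition Mplus (R : realType) (F : 'M[R]_(3, 2)) : Prop :=
  0 < \det (F^T *m F).

Definition WF (R : realType) (W : 'M[R]_(3, 2) -> R) (F : 'M[R]_(3, 2))
  : 'M[R]_(3, 2) :=
  \matrix_(i < 3, j < 2) ('d W F (delta_mx i j)).

From HB Require Import structures.
From mathcomp Require Import all_boot all_order all_algebra.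
From mathcomp Require Import all_classical all_reals all_analysis.
From mathcomp Require Import ring lra.
Set Implicit Arguments. Unset Strict Implicit. Unset Printing Implicit Defensive.
Import Order.TTheory GRing.Theory Num.Theory.
Import numFieldNormedType.Exports.
Local Open Scope ring_scope.

(* Write T A = (1 + E) A with E = T - P, so |E| < 1/2, and follow the path
   F_t = (1 + t E) A, t in [0, 1], which stays in R^{3x2}_+ because 1 + t E is
   invertible, with |(1 + t E)^-1| <= 2 |1|.  Since E A = E (1 + t E)^-1 F_t,
   d/dt W(F_t) = <W_F(F_t), E A> = <E (1 + t E)^-1, W_F(F_t) F_t^T>, so (H4)
   gives d/dt W(F_t) <= |1| K (W(F_t) + 1), and Gronwall yields
   W(T A) + 1 <= exp(|1| K) (W(A) + 1).  Finally A^T = (T A)^T (1 + E)^-T, so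
   (H4) at T A bounds |W_F(T A) A^T| by 2 |1| K exp(|1| K) (W(A) + 1). *)

Lemma sumr_CauchySchwarz (R : realFieldType) (I : finType) (a b : I -> R) :
  (\sum_i a i * b i) ^+ 2 <= (\sum_i a i ^+ 2) * (\sum_i b i ^+ 2).
Proof.
set A := \sum_i a i ^+ 2; set B := \sum_i b i ^+ 2; set C := \sum_i a i * b i.
have B_ge0 : 0 <= B by apply: sumr_ge0 => i _; exact: sqr_ge0.
have [B0 | B_neq0] := eqVneq B 0.
  have b0 i : b i = 0.
    apply/eqP; rewrite -sqrf_eq0; apply/eqP.
    by apply: (psumr_eq0P _ B0) => // j _; exact: sqr_ge0.
  by rewrite /C big1 ?expr0n ?B0 ?mulr0 // => i _; rewrite b0 mulr0.
have lagrange : \sum_i (B * a i - C * b i) ^+ 2 = B * (A * B - C ^+ 2).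
  transitivity (\sum_i (B ^+ 2 * a i ^+ 2 - (2 * B * C) * (a i * b i)
                        + C ^+ 2 * b i ^+ 2)).
    by apply: eq_bigr => i _; ring.
  rewrite big_split /= big_split /= sumrN -!mulr_sumr -/A -/B -/C; ring.
have : 0 <= B * (A * B - C ^+ 2).
  by rewrite -lagrange; apply: sumr_ge0 => i _; exact: sqr_ge0.
by rewrite pmulr_rge0 ?subr_ge0 // lt_def B_neq0.
Qed.

Lemma det_mx22 (R : comNzRingType) (M : 'M[R]_2) :
  \det M = M 0 0 * M 1 1 - M 0 1 * M 1 0.
Proof.
rewrite (expand_det_row _ ord0) !big_ord_recl big_ord0 /cofactor.
rewrite !det_mx11 /= !mxE /= addr0 expr0 expr1 mul1r mulN1r mulrN.
congr (_ * M _ _ - _ * M _ _).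
all: by [apply: val_inj | congr (M _ _); apply: val_inj].
Qed.

Section Frobenius.
Variable R : realType.

Definition frob_dot m n (X Y : 'M[R]_(m, n)) : R := \tr (X *m Y^T).

Lemma frob_dotE m n (X Y : 'M[R]_(m, n)) :
  frob_dot X Y = \sum_i \sum_j X i j * Y i j.
Proof.
by apply: eq_bigr => i _; rewrite mxE; apply: eq_bigr => j _; rewrite mxE.
Qed.

Lemma frob_dot_mulmxl m n p (X : 'M[R]_(m, n)) (F : 'M[R]_(n, p)) Y :
  frob_dot (X *m F) Y = frob_dot X (Y *m F^T).
Proof. by rewrite /frob_dot trmx_mul trmxK mulmxA. Qed.

Lemma frob_ge0 m n (X : 'M[R]_(m, n)) : 0 <= frob X.
Proof. exact: sqrtr_ge0. Qed.

Lemma sqr_frob m n (X : 'M[R]_(m, n)) : frob X ^+ 2 = frob_dot X X.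
Proof.
rewrite frob_dotE sqr_sqrtr; last first.
  by apply: sumr_ge0 => i _; apply: sumr_ge0 => j _; exact: sqr_ge0.
by apply: eq_bigr => i _; apply: eq_bigr => j _; rewrite expr2.
Qed.

Lemma frob_dot_le m n (X Y : 'M[R]_(m, n)) : frob_dot X Y <= frob X * frob Y.
Proof.
apply: le_trans (ler_norm _) _.
rewrite -ler_sqr ?nnegrE ?mulr_ge0 ?frob_ge0 // real_normK ?num_real //.
rewrite exprMn !sqr_frob !frob_dotE !pair_bigA /=.
under [X in _ <= X * _]eq_bigr do rewrite -expr2.
under [X in _ <= _ * X]eq_bigr do rewrite -expr2.
exact: (sumr_CauchySchwarz (fun p => X p.1 p.2) (fun p => Y p.1 p.2)).
Qed.

Lemma frobD m n (X Y : 'M[R]_(m, n)) : frob (X + Y) <= frob X + frob Y.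
Proof.
rewrite -ler_sqr ?nnegrE ?addr_ge0 ?frob_ge0 //.
have dotD : frob_dot (X + Y) (X + Y) = frob_dot X X + 2 * frob_dot X Y + frob_dot Y Y.
  rewrite /frob_dot linearD /= !mulmxDl !mulmxDr !mxtraceD.
  by rewrite -[\tr (Y *m X^T)]mxtrace_tr trmx_mul trmxK; ring.
rewrite sqr_frob dotD sqrrD -!sqr_frob.
have := frob_dot_le X Y; lra.
Qed.

Lemma frobZ m n a (X : 'M[R]_(m, n)) : frob (a *: X) = `|a| * frob X.
Proof.
rewrite /frob -sqrtr_sqr -sqrtrM ?sqr_ge0 // mulr_sumr; congr Num.sqrt.
by apply: eq_bigr => i _; rewrite mulr_sumr; apply: eq_bigr => j _; rewrite mxE exprMn.
Qed.

Lemma frobN m n (X : 'M[R]_(m, n)) : frob (- X) = frob X.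
Proof. by rewrite -scaleN1r frobZ normrN normr1 mul1r. Qed.

Lemma frob_tr m n (X : 'M[R]_(m, n)) : frob X^T = frob X.
Proof.
rewrite /frob exchange_big; congr Num.sqrt.
by apply: eq_bigr => i _; apply: eq_bigr => j _; rewrite mxE.
Qed.

Lemma frob_mulmx m n p (X : 'M[R]_(m, n)) (Y : 'M[R]_(n, p)) :
  frob (X *m Y) <= frob X * frob Y.
Proof.
rewrite -ler_sqr ?nnegrE ?mulr_ge0 ?frob_ge0 // exprMn !sqr_frob !frob_dotE.
rewrite [X in _ <= _ * X]exchange_big /= mulr_suml.
apply: ler_sum => i _; rewrite mulr_sumr; apply: ler_sum => k _; rewrite mxE.
under [X in _ <= X * _]eq_bigr do rewrite -expr2.
under [X in _ <= _ * X]eq_bigr do rewrite -expr2.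
rewrite -expr2; exact: sumr_CauchySchwarz.
Qed.

Lemma frob_eq0 m n (X : 'M[R]_(m, n)) : (frob X == 0) = (X == 0).
Proof.
apply/idP/eqP => [|->]; last first.
  by rewrite /frob big1 ?sqrtr0 // => i _; rewrite big1 // => j _; rewrite mxE expr0n.
rewrite sqrtr_eq0 => sum_le0; apply/matrixP => i j; rewrite mxE.
have sq_ge0 i' : 0 <= \sum_j' X i' j' ^+ 2 by apply: sumr_ge0 => j' _; exact: sqr_ge0.
have sum0 : \sum_i' \sum_j' X i' j' ^+ 2 = 0.
  by apply/eqP; rewrite eq_le sum_le0 sumr_ge0.
have row0 : \sum_j' X i j' ^+ 2 = 0 by apply: (psumr_eq0P _ sum0).
have /eqP : X i j ^+ 2 = 0 by apply: (psumr_eq0P _ row0) => // j' _; exact: sqr_ge0.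
by rewrite sqrf_eq0 => /eqP.
Qed.

Lemma mulmx_tr_eq0 m n (X : 'M[R]_(m, n)) : X *m X^T = 0 -> X = 0.
Proof.
move=> XXt0; apply/eqP; rewrite -frob_eq0 -sqrf_eq0 sqr_frob.
by rewrite /frob_dot XXt0 mxtrace0.
Qed.

Lemma row_free_gram m n (F : 'M[R]_(m, n)) : row_free (F *m F^T) = row_free F.
Proof.
apply/idP/idP => [|freeF].
  by rewrite -!row_leq_rank => /leq_trans; apply; exact: mxrankM_maxl.
apply: inj_row_free => v /(congr1 (mulmx^~ v^T)).
rewrite mul0mx -!mulmxA -trmx_mul mulmxA => /mulmx_tr_eq0 /eqP.
by rewrite mulmx_free_eq0 // => /eqP.
Qed.

Lemma det_gram2_ge0 m (F : 'M[R]_(m, 2)) : 0 <= \det (F^T *m F).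
Proof.
have gramE i j : (F^T *m F) i j = \sum_k F k i * F k j.
  by rewrite mxE; apply: eq_bigr => k _; rewrite mxE.
rewrite det_mx22 !gramE subr_ge0.
rewrite [X in _ * X <= _](eq_bigr (fun k => F k 0 * F k 1)) => [|k _]; last first.
  by rewrite mulrC.
have sqE j : \sum_k F k j * F k j = \sum_k F k j ^+ 2.
  by apply: eq_bigr => k _; rewrite expr2.
rewrite -expr2 !sqE; exact: sumr_CauchySchwarz.
Qed.

Lemma Mplus_unitmx (F : 'M[R]_(3, 2)) : Mplus F <-> F^T *m F \in unitmx.
Proof.
by rewrite /Mplus unitmxE unitfE lt_def det_gram2_ge0 andbT.
Qed.

Lemma Mplus_mulmx (M : 'M[R]_3) (A : 'M[R]_(3, 2)) :
  M \in unitmx -> Mplus A -> Mplus (M *m A).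
Proof.
have gramE (F : 'M[R]_(3, 2)) : row_free (F^T *m F) = row_free F^T.
  by rewrite -{2}[F]trmxK row_free_gram.
move=> unitM; rewrite !Mplus_unitmx -!row_free_unit !gramE trmx_mul.
by rewrite /row_free mxrankMfree // row_free_unit unitmx_tr.
Qed.

End Frobenius.

Section NearIdentity.
Variables (R : realType) (n : nat).
Implicit Type E : 'M[R]_n.

Lemma unitmx_1D E : frob E < 1 -> 1%:M + E \in unitmx.
Proof.
move=> E_lt1; rewrite -row_free_unit; apply: inj_row_free => v vE0.
have v_eq : v = - (v *m E).
  by apply/eqP; rewrite -addr_eq0 -{1}[v]mulmx1 -mulmxDr vE0.
have : frob v <= frob v * frob E by rewrite {1}v_eq frobN frob_mulmx.
have := frob_ge0 v => v_ge0 v_le; apply/eqP; rewrite -frob_eq0 eq_le v_ge0 andbT.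
nra.
Qed.

Lemma frob_invmx_1D E :
  frob E < 1 -> (1 - frob E) * frob (invmx (1%:M + E)) <= frob (1%:M : 'M[R]_n).
Proof.
move=> E_lt1; set S := invmx _.
have : (1%:M + E) *m S = 1%:M by rewrite mulmxV // unitmx_1D.
rewrite mulmxDl mul1mx => /(canRL (addrK (E *m S))) S_eq.
have : frob S <= frob (1%:M : 'M[R]_n) + frob E * frob S.
  by rewrite {1}S_eq; apply: le_trans (frobD _ _) _; rewrite frobN lerD2l frob_mulmx.
nra.
Qed.

Lemma frob_invmx_1D_half E :
  frob E <= 2^-1 -> frob (invmx (1%:M + E)) <= 2 * frob (1%:M : 'M[R]_n).
Proof.
move=> E_le; have E_lt1 : frob E < 1.
  by apply: le_lt_trans E_le _; rewrite invf_lt1 ?ltr1n.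
have := frob_invmx_1D E_lt1; have := frob_ge0 (invmx (1%:M + E)); nra.
Qed.

End NearIdentity.

Section Gronwall.
Variable R : realType.

Lemma is_derive_expRM (c t : R) :
  is_derive t 1 (fun s : R => expR (c * s)) (expR (c * t) * c).
Proof.
apply: (@is_derive1_comp R expR ( *%R c) t (expR (c * t)) c).
by rewrite -[X in is_derive _ _ _ X]mulr1; apply: is_deriveZ.
Qed.

Lemma gronwall_affine (g : R -> R) (c a b : R) : a <= b ->
  (forall t, a <= t <= b -> derivable g t 1) ->
  (forall t, a <= t <= b -> derive1 g t <= c * (g t + 1)) ->
  g b + 1 <= expR (c * (b - a)) * (g a + 1).
Proof.
move=> ab dg g'_le.
pose h t := (g t + 1) * expR (- c * t).
have h'_le0 t : a <= t <= b -> derivable h t 1 /\ derive1 h t <= 0.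
  move=> abt; have dh : is_derive t 1 h
    ((g t + 1) *: (expR (- c * t) * - c) + expR (- c * t) *: ('D_1 g t + 0)).
    exact: is_deriveM (is_deriveD (derivableP (dg t abt)) _) (is_derive_expRM _ t).
  split; first by case: dh.
  rewrite derive1E derive_val addr0 -derive1E /GRing.scale /=.
  have := g'_le t abt; have := expR_gt0 (- c * t); nra.
have hba : h b <= h a.
  have itv t : t \in `]a, b[ -> a <= t <= b.
    by rewrite in_itv /= => /andP[ta tb]; rewrite !ltW.
  apply: (@ler0_derive1_le_cc R h a b) => //.
  - by move=> t /itv /h'_le0 [].
  - by move=> t /itv /h'_le0 [].
  - by apply: derivable_within_continuous => t; rewrite in_itv /= => /h'_le0 [].
  - by rewrite in_itv /= lexx ab.
  - by rewrite in_itv /= lexx ab.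
have -> : expR (c * (b - a)) = expR (c * b) * expR (- c * a).
  by rewrite -expRD; congr expR; ring.
have ecb : expR (c * b) * expR (- c * b) = 1 by rewrite -expRD mulNr addrN expR0.
move: hba; rewrite /h -(ler_pM2l (expR_gt0 (c * b))) mulrCA ecb mulr1.
by rewrite mulrCA mulrC.
Qed.

End Gronwall.

Lemma is_derive_line (R : realType) (V U : normedModType R) (f : V -> U) (A B : V) t :
  differentiable f (t *: B + A) ->
  is_derive t 1 (fun s : R => f (s *: B + A)) ('d f (t *: B + A) B).
Proof.
move=> df.
have quotE : (fun h : R => h^-1 *: (((fun s : R => f (s *: B + A)) \o shift t) (h *: 1)
                                    - f (t *: B + A)))
           = (fun h : R => h^-1 *: ((f \o shift (t *: B + A)) (h *: B) - f (t *: B + A))).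
  by apply/funext => h /=; rewrite /shift [h *: 1]mulr1 scalerDl addrA.
apply: DeriveDef; first by rewrite /derivable quotE; exact: diff_derivable.
by rewrite /derive quotE -/(derive f _ B); exact: deriveE.
Qed.

Lemma diff_WF (R : realType) (W : 'M[R]_(3, 2) -> R) F B :
  'd W F B = frob_dot B (WF W F).
Proof.
rewrite frob_dotE {1}[B]matrix_sum_delta !linear_sum; apply: eq_bigr => i _.
by rewrite linear_sum; apply: eq_bigr => j _; rewrite linearZ mxE.
Qed.

Section Transport.
Variables (R : realType) (W : 'M[R]_(3, 2) -> R) (K : R).
Hypothesis W_diff : forall F, Mplus F -> differentiable W F.
Hypothesis K_ge0 : 0 <= K.
Hypothesis H4 : forall F, Mplus F -> frob (WF W F *m F^T) <= K * (W F + 1).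
Variables (E : 'M[R]_3) (A : 'M[R]_(3, 2)).
Hypotheses (E_small : frob E <= 2^-1) (A_plus : Mplus A).

Local Notation L := (frob (1%:M : 'M[R]_3)).

Lemma path_mulmx t : (1%:M + t *: E) *m A = t *: (E *m A) + A.
Proof. by rewrite mulmxDl mul1mx -scalemxAl addrC. Qed.

Lemma frob_path_small t : 0 <= t <= 1 -> frob (t *: E) <= 2^-1.
Proof.
move=> /andP[t_ge0 t_le1]; rewrite frobZ ger0_norm //.
by apply: le_trans E_small; rewrite ler_piMl ?frob_ge0.
Qed.

Lemma unitmx_path t : 0 <= t <= 1 -> 1%:M + t *: E \in unitmx.
Proof.
move=> t01; apply: unitmx_1D.
by apply: le_lt_trans (frob_path_small t01) _; rewrite invf_lt1 ?ltr1n.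
Qed.

Lemma Mplus_path t : 0 <= t <= 1 -> Mplus (t *: (E *m A) + A).
Proof.
by move=> t01; rewrite -path_mulmx; apply: Mplus_mulmx A_plus; exact: unitmx_path.
Qed.

Lemma derive_W_path_le t : 0 <= t <= 1 ->
  derive1 (fun s => W (s *: (E *m A) + A)) t
    <= L * K * (W (t *: (E *m A) + A) + 1).
Proof.
move=> t01; rewrite derive1E.
have [_ ->] := is_derive_line (W_diff (Mplus_path t01)).
rewrite diff_WF; set F := t *: (E *m A) + A; set S := invmx (1%:M + t *: E).
have SF : S *m F = A.
  by rewrite /F -path_mulmx mulmxA mulVmx ?mul1mx // unitmx_path.
rewrite -{1}SF mulmxA frob_dot_mulmxl -mulrA.
apply: le_trans (frob_dot_le _ _) _.
apply: ler_pM (frob_ge0 _) (frob_ge0 _) _ (H4 (Mplus_path t01)).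
apply: le_trans (frob_mulmx _ _) _.
apply: le_trans (ler_pM (frob_ge0 _) (frob_ge0 _) E_small
                   (frob_invmx_1D_half (frob_path_small t01))) _.
by rewrite mulrA mulVf ?mul1r // pnatr_eq0.
Qed.

Lemma W_path_growth : W ((1%:M + E) *m A) + 1 <= expR (L * K) * (W A + 1).
Proof.
rewrite -[E in 1%:M + E]scale1r path_mulmx.
have := @gronwall_affine R (fun s => W (s *: (E *m A) + A)) (L * K) 0 1 ler01.
rewrite subr0 mulr1 scale0r add0r; apply => t t01; last exact: derive_W_path_le.
by have [] := is_derive_line (W_diff (Mplus_path t01)).
Qed.

Lemma WF_transport_le :
  frob (WF W ((1%:M + E) *m A) *m A^T) <= 2 * L * K * expR (L * K) * (W A + 1).
Proof.
set F := (1%:M + E) *m A; set S := invmx (1%:M + E).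
have unitE : 1%:M + E \in unitmx by rewrite -[E]scale1r unitmx_path // ler01 lexx.
have -> : A^T = F^T *m S^T by rewrite -trmx_mul /F mulmxA mulVmx ?mul1mx.
apply: le_trans (_ : K * (W F + 1) * (2 * L) <= _).
  rewrite mulmxA; apply: le_trans (frob_mulmx _ _) _.
  apply: ler_pM (frob_ge0 _) (frob_ge0 _) (H4 _) _.
    by rewrite /F -[E]scale1r path_mulmx; apply: Mplus_path; rewrite ler01 lexx.
  by rewrite frob_tr frob_invmx_1D_half.
have KL_ge0 : 0 <= 2 * L * K by rewrite !mulr_ge0 ?frob_ge0.
have := ler_wpM2l KL_ge0 W_path_growth; rewrite -/F; lra.
Qed.

End Transport.

Theorem lemma10 (R : realType) (W : 'M[R]_(3, 2) -> R) (K : R) :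
  (* W : R^{3x2}_+ -> [0, oo) *)
  (forall F, Mplus F -> 0 <= W F) ->
  (* W is continuously differentiable on the open set R^{3x2}_+ *)
  (forall F, Mplus F -> differentiable W F) ->
  (forall F, Mplus F -> {for F, continuous (WF W)}) ->
  (* (H4) *)
  0 < K ->
  (forall F, Mplus F -> frob (WF W F *m F^T) <= K * (W F + 1)) ->
  (* V = range of the orthogonal projection P, dim V = 2; the identity 1 on V
     is represented by P, and T in L(V) by the 3x3 matrix T = P T P *)
  forall P : 'M[R]_3, P^T = P -> P *m P = P -> \rank P = 2%N ->
  exists delta : R, 0 < delta /\
    forall T : 'M[R]_3, P *m T *m P = T -> frob (T - P) < delta ->
    exists C : R, 0 < C /\
      forall A : 'M[R]_(3, 2), P *m A = A -> Mplus A ->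
        frob (WF W (T *m A) *m A^T) <= C * (W A + 1).
Proof.
move=> W_ge0 W_diff _ K_gt0 H4 P _ _ _.
exists 2^-1; split; first by rewrite invr_gt0 ltr0n.
move=> T _ T_near.
set L := frob (1%:M : 'M[R]_3).
set C0 := 2 * L * K * expR (L * K).
have C0_ge0 : 0 <= C0 by rewrite !mulr_ge0 ?frob_ge0 ?expR_ge0 // ltW.
exists (C0 + 1); split; first by rewrite ltr_wpDl.
move=> A PA A_plus.
have -> : T *m A = (1%:M + (T - P)) *m A.
  by rewrite mulmxDl mulmxBl PA mul1mx addrC subrK.
apply: le_trans (WF_transport_le W_diff (ltW K_gt0) H4 (ltW T_near) A_plus) _.
by rewrite -/L -/C0 mulrDl mul1r lerDl addr_ge0 ?W_ge0.
Qed.
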